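(* Let $W\in L^\infty$ and $\lambda=(\lambda_1,\dots,\lambda_T)\in\mathbb{R}_+^T\setminus\{0\}$. (a) If $(X_t)_{t\in\mathbb{T}}\in\mathcal{A}(W)$ solves Problem $\mathrm{P}_\lambda$, then $(\lambda_t u_t'(\tilde X_t))_{t\in\mathbb{T}}$ is an $(\mathcal{F}_t)$-martingale. (b) If Problem $\mathrm{P}_\lambda$ has a solution, then $\lambda\in(0,\infty)^T$.
   Context: Let $T\ge 1$ be an integer and $\mathbb{T}=\{1,\dots,T\}$. Let $(\Omega,\mathcal{F},(\mathcal{F}_t)_{t\in\{0,1,\dots,T\}},P)$ be a filtered probability space and $L^{\infty}=L^{\infty}(\Omega,\mathcal{F}_T,P)$. Let $(r_t)_{t\in\mathbb{T}}$ be a bounded, nonnegative, predictable process ($r_t$ is $\mathcal{F}_{t-1}$-measurable), $B_0=1$, $B_t=\prod_{k=1}^t(1+r_k)$, and for a process $(X_t)$ write $\tilde X_t=X_t/B_t$. For $W\in L^\infty$, $\mathcal{A}(W)$ is the set of $(\mathcal{F}_t)$-adapted processes $(Y_t)_{t\in\mathbb{T}}$ with $Y_t\in L^\infty$ for all $t$ and $\sum_{t\in\mathbb{T}}\tilde Y_t=W$ a.s. For each $t\in\mathbb{T}$, $u_t:\mathbb{R}\to\mathbb{R}$ is strictly concave, $C^1$, with $u_t'(x)>0$ for all $x$. For $\lambda\in\mathbb{R}_+^T\setminus\{0\}$, Problem $\mathrm{P}_\lambda$ is: maximize $\sum_{t\in\mathbb{T}}\lambda_tE[u_t(\tilde Y_t)]$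 over $(Y_t)\in\mathcal{A}(W)$; a solution is an element of $\mathcal{A}(W)$ attaining the maximum. *)

From HB Require Import structures.
From mathcomp Require Import all_boot all_order all_algebra.
From mathcomp Require Import all_classical all_reals all_analysis.
Set Implicit Arguments. Unset Strict Implicit. Unset Printing Implicit Defensive.
Import Order.TTheory GRing.Theory Num.Theory.
Import numFieldNormedType.Exports.
Local Open Scope classical_set_scope.
Local Open Scope ring_scope.

Section Defs.
Context {d : measure_display} {Omega : measurableType d} {R : realType}.

Definition sub_sigma (G : set (set Omega)) :=
  sigma_algebra setT G /\ G `<=` measurable.

Definition filtration (T : nat) (F : nat -> set (set Omega)) :=
  (forall t, (t <= T)%N -> sub_sigma (F t)) /\
  (forall s t, (s <= t <= T)%N -> F s `<=` F t).

Definition meas_wrt (G : set (set Omega)) (f : Omega -> R) :=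
  forall B : set R, measurable B -> G (f @^-1` B).

Definition Linfty (P : probability Omega R) (G : set (set Omega))
  (f : Omega -> R) :=
  meas_wrt G f /\ exists M : R, {ae P, forall w, `|f w| <= M}.

Definition bank (r : nat -> Omega -> R) (t : nat) (w : Omega) : R :=
  \prod_(1 <= k < t.+1) (1 + r k w).

Definition disc (r : nat -> Omega -> R) (X : nat -> Omega -> R)
  (t : nat) (w : Omega) : R := X t w / bank r t w.

Definition admissible (P : probability Omega R) (T : nat)
  (F : nat -> set (set Omega)) (r : nat -> Omega -> R) (W : Omega -> R)
  (Y : nat -> Omega -> R) :=
  (forall t, (1 <= t <= T)%N -> meas_wrt (F t) (Y t)) /\
  (forall t, (1 <= t <= T)%N -> Linfty P (F T) (Y t)) /\
  {ae P, forall w, \sum_(1 <= t < T.+1) disc r Y t w = W w}.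

Definition objective (P : probability Omega R) (T : nat)
  (r : nat -> Omega -> R) (u : nat -> R -> R) (lam : nat -> R)
  (Y : nat -> Omega -> R) : \bar R :=
  (\sum_(1 <= t < T.+1)
     (lam t)%:E * \int[P]_w (u t (disc r Y t w))%:E)%E.

Definition solves (P : probability Omega R) (T : nat)
  (F : nat -> set (set Omega)) (r : nat -> Omega -> R) (W : Omega -> R)
  (u : nat -> R -> R) (lam : nat -> R) (X : nat -> Omega -> R) :=
  admissible P T F r W X /\
  forall Y, admissible P T F r W Y ->
    (objective P T r u lam Y <= objective P T r u lam X)%E.

(** (M_t)_{t in {1..T}} is an (F_t)-martingale under P:
    adapted, integrable, and E[M_t | F_s] = M_s for 1 <= s <= t <= T,
    the conditional expectation being expressed by its defining property. *)
Definition martingale (P : probability Omega R) (T : nat)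
  (F : nat -> set (set Omega)) (M : nat -> Omega -> R) :=
  (forall t, (1 <= t <= T)%N -> meas_wrt (F t) (M t)) /\
  (forall t, (1 <= t <= T)%N -> P.-integrable setT (EFin \o M t)) /\
  (forall s t, (1 <= s)%N -> (s <= t <= T)%N -> forall A, F s A ->
     (\int[P]_(w in A) (M t w)%:E = \int[P]_(w in A) (M s w)%:E)%E).

End Defs.

Definition strictly_concave {R : realType} (f : R -> R) :=
  forall x y : R, x != y -> forall a : R, 0 < a < 1 ->
    a * f x + (1 - a) * f y < f (a * x + (1 - a) * y).

(* Perturbation argument.  For s < t and A in F_s, the strategy [transfer X e]
   moves e units of discounted wealth from date t to date s on the event A.  It
   stays admissible, because the budget constraint only sees the sum of the
   discounted payments, and for an optimal X its objective differs from that of X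
   by the nonpositive quantity
     lam_s E[1_A (u_s(X~_s + e) - u_s(X~_s))] + lam_t E[1_A (u_t(X~_t - e) - u_t(X~_t))].
   Since X~_s and X~_t are essentially bounded and u_s', u_t' are uniformly
   continuous on compact intervals, this equals
   e (lam_s E[1_A u_s'(X~_s)] - lam_t E[1_A u_t'(X~_t)]) + o(e); letting e -> 0 from
   both sides gives the martingale identity.  With A = Omega, lam_t = 0 would force
   lam_q E[u_q'(X~_q)] = 0 for every date q, contradicting u' > 0 and lam <> 0. *)

From HB Require Import structures.
From mathcomp Require Import all_boot all_order all_algebra.
From mathcomp Require Import all_classical all_reals all_analysis.
From mathcomp Require Import ring lra measurable_realfun.
Import Order.TTheory GRing.Theory Num.Theory.
Import numFieldNormedType.Exports.
Local Open Scope classical_set_scope.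
Local Open Scope ring_scope.

Section meas_wrt.
Context {d} {Omega : measurableType d} {R : realType} {G : set (set Omega)}.
Hypothesis sigmaG : sigma_algebra setT G.
Implicit Types f g : Omega -> R.

Lemma meas_wrtP f :
  meas_wrt G f <-> measurable_fun (setT : set (g_sigma_algebraType G)) f.
Proof.
split=> [mf _ B mB|mf B mB]; rewrite ?setTI.
  by apply: sub_gen_smallest; exact: mf.
by rewrite -[G](sigma_algebra_id sigmaG); have := mf measurableT B mB; rewrite setTI.
Qed.

Lemma meas_wrt_cst (c : R) : meas_wrt G (fun=> c).
Proof. by apply/meas_wrtP; exact: measurable_cst. Qed.

Lemma meas_wrtD {f g} :
  meas_wrt G f -> meas_wrt G g -> meas_wrt G (fun w => f w + g w).
Proof.
by move=> /meas_wrtP mf /meas_wrtP mg; apply/meas_wrtP; exact: measurable_funD.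
Qed.

Lemma meas_wrtM {f g} :
  meas_wrt G f -> meas_wrt G g -> meas_wrt G (fun w => f w * g w).
Proof.
by move=> /meas_wrtP mf /meas_wrtP mg; apply/meas_wrtP; exact: measurable_funM.
Qed.

Lemma meas_wrt_comp (h : R -> R) {f} :
  continuous h -> meas_wrt G f -> meas_wrt G (fun w => h (f w)).
Proof.
move=> ch /meas_wrtP mf; apply/meas_wrtP.
exact: measurableT_comp (continuous_measurable_fun ch) mf.
Qed.

Lemma meas_wrt_indic {A} : G A -> meas_wrt G (\1_A : Omega -> R).
Proof.
move=> GA; apply/meas_wrtP.
by apply: (@measurable_indic _ (g_sigma_algebraType G)); exact: sub_gen_smallest.
Qed.

Lemma meas_wrt_divr {f g} :
  meas_wrt G f -> meas_wrt G g -> (forall w, 1 <= g w) ->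
  meas_wrt G (fun w => f w / g w).
Proof.
move=> mf mg g_ge1.
have -> : (fun w => f w / g w) = (fun w => f w * (Num.max (g w) 1)^-1).
  by apply/funext => w; rewrite max_l ?g_ge1.
apply: meas_wrtM mf (meas_wrt_comp (fun v => (Num.max v 1)^-1) _ mg) => v.
apply: (@continuous_comp _ _ _ (fun v : R => Num.max v 1) GRing.inv).
  by apply: continuous_max => //; exact: cst_continuous.
by apply: inv_continuous; rewrite gt_eqF // lt_max ltr01 orbT.
Qed.

End meas_wrt.

Lemma meas_wrt_measurable {d} {Omega : measurableType d} {R : realType}
    {G : set (set Omega)} {f : Omega -> R} :
  sub_sigma G -> meas_wrt G f -> measurable_fun setT f.
Proof. by move=> [_ sG] mf _ B mB; rewrite setTI; apply: sG; exact: mf. Qed.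

Lemma meas_wrtS {d} {Omega : measurableType d} {R : realType}
    {G H : set (set Omega)} {f : Omega -> R} :
  G `<=` H -> meas_wrt G f -> meas_wrt H f.
Proof. by move=> GH mf B mB; apply: GH; exact: mf. Qed.

Lemma filtration_setT {d} {Omega : measurableType d} {T t : nat}
    {F : nat -> set (set Omega)} :
  filtration T F -> (t <= T)%N -> F t setT.
Proof.
by move=> hF tT; have [[G0 GC _] _] := hF.1 t tT; rewrite -(setD0 setT); exact: GC.
Qed.

Lemma sum_nat_supp2 {V : nmodType} (m n i j : nat) (f : nat -> V) :
  i != j -> (m <= i < n)%N -> (m <= j < n)%N ->
  (forall k, (m <= k < n)%N -> k != i -> k != j -> f k = 0) ->
  \sum_(m <= k < n) f k = f i + f j.
Proof.
move=> ij hi hj f0; rewrite (bigD1_seq i) ?mem_index_iota ?iota_uniq //=.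
rewrite big_mkcond (bigD1_seq j) ?mem_index_iota ?iota_uniq //= eq_sym ij.
rewrite big1_seq ?addr0 // => k /andP[kj]; rewrite mem_index_iota => hk.
by case: ifP => // ki; apply: f0.
Qed.

Section real_analysis.
Context {R : realType}.
Implicit Types (f : R -> R) (a b : R).

Lemma continuous_bounded_itv f a b : continuous f ->
  exists C, forall y, a <= y <= b -> `|f y| <= C.
Proof.
move=> cf; have [ab|ba] := leP a b; last first.
  by exists 0 => y /andP[ay yb]; have := lt_le_trans ba (le_trans ay yb); rewrite ltxx.
have cfab : {within `[a, b], continuous f} by exact: continuous_subspaceT.
have [c1 _ fc1] := EVT_max ab cfab; have [c2 _ fc2] := EVT_min ab cfab.
exists (`|f c1| + `|f c2|) => y yab; have yin : y \in `[a, b] by rewrite in_itv.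
have := fc1 _ yin; have := fc2 _ yin; have := ler_norm (f c1).
have := ler_norm (- f c2); rewrite normrN ler_norml.
have := normr_ge0 (f c1); have := normr_ge0 (f c2); lra.
Qed.

Lemma continuous_gt0_itv f a b : continuous f -> (forall x, 0 < f x) ->
  exists2 m, 0 < m & forall y, a <= y <= b -> m <= f y.
Proof.
move=> cf f_gt0; have [ab|ba] := leP a b; last first.
  by exists 1 => // y /andP[ay yb]; have := lt_le_trans ba (le_trans ay yb); rewrite ltxx.
have [c _ fc] := EVT_min ab (continuous_subspaceT cf).
by exists (f c) => // y yab; apply: fc; rewrite in_itv.
Qed.

Lemma continuous_unif_itv f a b eta : continuous f -> 0 < eta ->
  exists2 del, 0 < del &
    forall x z, a <= x <= b -> `|z - x| <= del -> `|f z - f x| <= eta.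
Proof.
move=> cf eta0.
have /compact_near_coveringP cov := @segment_compact R a b.
pose P (i x : R) := forall z, `|z - x| <= `|i| -> `|f z - f x| <= eta.
have : \forall i \near nbhs (0 : R), `[a, b] `<=` P i.
  apply: cov => x _.
  have /cvgrPdist_lt /(_ (eta / 2)) := cf x.
  move=> /(_ ltac:(lra)) /nbhs_ballP[rho /= rho0 frho].
  exists (ball x (rho / 2), ball 0 (rho / 2)); first by split; apply: nbhsx_ballx; lra.
  case=> x' i [/= + +] z zx; rewrite /ball /= sub0r normrN => xx' ir.
  have xz : `|x - z| < rho.
    have := ler_normD (x - x') (x' - z); rewrite addrA subrK (distrC x' z); lra.
  have := frho z xz; have := frho x' ltac:(rewrite /ball /=; lra).
  have := ler_normD (f z - f x) (f x - f x').
  rewrite addrA subrK (distrC (f z) (f x)); lra.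
move=> /nbhs_ballP[e /= e0 he]; exists (e / 2); first lra.
move=> x z xab zx; apply: (he (e / 2)).
- by rewrite /ball /= sub0r normrN gtr0_norm; lra.
- by rewrite /= in_itv.
- by rewrite (@gtr0_norm _ (e / 2)); lra.
Qed.

Lemma derivable_first_order f M eta :
  (forall x, derivable f x 1) -> continuous (derive1 f) -> 0 < eta ->
  exists2 del, 0 < del & forall x h, `|x| <= M -> `|h| <= del ->
    `|f (x + h) - f x - h * derive1 f x| <= `|h| * eta.
Proof.
move=> df cf' eta0.
have [del del0 hdel] := continuous_unif_itv (derive1 f) (- M) M eta cf' eta0.
exists del => // x h xM hdel'; have xin : - M <= x <= M by rewrite -ler_norml.
have cf : continuous f.
  by move=> y; apply: differentiable_continuous; exact/derivable1_diffP.
have f'E (y : R) : is_derive y (1 : R) f (derive1 f y).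
  by rewrite derive1E; exact: derivableP.
suff [c xc ->] : exists2 c, `|c - x| <= `|h| & f (x + h) - f x = h * derive1 f c.
  rewrite -mulrBr normrM ler_wpM2l //; apply: hdel xin _; exact: le_trans xc hdel'.
have [h0|h0|->] := ltgtP h 0; last first.
  by exists x; rewrite ?subrr ?normr0 // mul0r addr0 subrr.
- have xxh : x < x + h by rewrite ltrDl.
  have [c] := MVT xxh (fun y _ => f'E y) (continuous_subspaceT cf).
  rewrite in_itv /= => /andP[c1 c2] e; exists c; last by rewrite e; ring.
  by rewrite (gtr0_norm h0) ler_norml; lra.
- have xhx : x + h < x by rewrite gtrDl.
  have [c] := MVT xhx (fun y _ => f'E y) (continuous_subspaceT cf).
  rewrite in_itv /= => /andP[c1 c2] e; exists c; last by rewrite -opprB e; ring.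
  by rewrite (ltr0_norm h0) ler_norml; lra.
Qed.

Lemma normr_le_eps_eq0 (x L : R) : 0 <= L ->
  (forall eta, 0 < eta -> `|x| <= L * eta) -> x = 0.
Proof.
move=> L0 small; apply/eqP; apply: contraT => x0.
have xp : 0 < `|x| by rewrite normr_gt0.
have L1 : 0 < L + 1 by lra.
have := small _ (divr_gt0 xp L1); rewrite mulrA.
have : L * `|x| / (L + 1) < `|x| by rewrite ltr_pdivrMr //; nra.
lra.
Qed.

End real_analysis.

Section integration.
Context {d} {Omega : measurableType d} {R : realType}.

Lemma ae_le_Rintegral (mu : {measure set Omega -> \bar R}) (D : set Omega)
    (f g : Omega -> R) : measurable D ->
  mu.-integrable D (EFin \o f) -> mu.-integrable D (EFin \o g) ->
  {ae mu, forall w, D w -> f w <= g w} ->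
  \int[mu]_(w in D) f w <= \int[mu]_(w in D) g w.
Proof.
move=> mD If Ig [N [mN N0 fgN]].
rewrite /Rintegral (negligible_integral mN mD If N0) (negligible_integral mN mD Ig N0).
have mDN := measurableD mD mN.
have IfN := integrableS mD mDN (@subDsetl _ _ _) If.
have IgN := integrableS mD mDN (@subDsetl _ _ _) Ig.
apply: fine_le (integrable_fin_num mDN IfN) (integrable_fin_num mDN IgN) _.
apply: le_integral => // w; rewrite inE => -[Dw Nw]; rewrite lee_fin.
by apply: contrapT => fg; apply: Nw; apply: fgN => /(_ Dw).
Qed.

Lemma Rintegral_indic_shift (mu : {measure set Omega -> \bar R}) (A : set Omega)
    (g : R -> R) (x : Omega -> R) (e : R) :
  \int[mu]_w (g (x w + e * \1_A w) - g (x w)) =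
  \int[mu]_(w in A) (g (x w + e) - g (x w)).
Proof.
rewrite [RHS]Rintegral_mkcond; apply: eq_Rintegral => w _.
by rewrite patchE indicE; case: (w \in A); rewrite ?mulr1 ?mulr0 ?addr0 ?subrr.
Qed.

Variable P : probability Omega R.

Lemma Rintegral_cst_prob (c : R) : \int[P]_w c = c.
Proof.
rewrite Rintegral_cst //; have -> : fine (P setT) = 1 by rewrite (probability_setT P).
exact: mulr1.
Qed.

Lemma integrable_ae_bounded (f : Omega -> R) (M : R) :
  measurable_fun setT f -> {ae P, forall w, `|f w| <= M} ->
  P.-integrable setT (EFin \o f).
Proof.
move=> mf fM; apply/integrableP; split; first exact/measurable_EFinP.
apply: (@le_lt_trans _ _ (\int[P]_w (cst `|M|%:E) w)%E).
  apply: ae_ge0_le_integral => //.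
  - by apply: measurableT_comp => //; exact/measurable_EFinP.
  - by move=> w _; rewrite /= lee_fin.
  - by apply: filterS fM => w fwM _ /=; rewrite lee_fin (le_trans fwM (ler_norm _)).
rewrite integral_cst //; set mT := (X in (_ * X)%E).
have -> : mT = 1%E by exact: probability_setT.
by rewrite mule1 ltry.
Qed.

Lemma integrable_comp_ae_bounded (g : R -> R) (x : Omega -> R) (M : R) :
  continuous g -> measurable_fun setT x -> {ae P, forall w, `|x w| <= M} ->
  P.-integrable setT (EFin \o (fun w => g (x w))).
Proof.
move=> cg mx xM; have [C gC] := continuous_bounded_itv g (- M) M cg.
apply: (@integrable_ae_bounded _ C).
  exact: measurableT_comp (continuous_measurable_fun cg) mx.
by apply: filterS xM => w xwM; apply: gC; rewrite -ler_norml.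
Qed.

Lemma integral_EFin {A : set Omega} {f : Omega -> R} : measurable A ->
  P.-integrable setT (EFin \o f) ->
  (\int[P]_(w in A) (f w)%:E)%E = (\int[P]_(w in A) f w)%:E.
Proof.
move=> mA If; rewrite /Rintegral fineK //.
by apply: integrable_fin_num => //; exact: integrableS If.
Qed.

Lemma Rintegral_comp_gt0 {g : R -> R} {x : Omega -> R} {M : R} :
  continuous g -> (forall y, 0 < g y) ->
  measurable_fun setT x -> {ae P, forall w, `|x w| <= M} ->
  0 < \int[P]_w g (x w).
Proof.
move=> cg g_gt0 mx xM; have [m m0 gm] := continuous_gt0_itv g (- M) M cg g_gt0.
apply: lt_le_trans m0 _; rewrite -[X in X <= _](Rintegral_cst_prob m).
apply: ae_le_Rintegral => //.
- by apply: (@integrable_ae_bounded _ `|m|) => //; exact: aeW.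
- exact: integrable_comp_ae_bounded cg mx xM.
- by apply: filterS xM => w xwM _; apply: gm; rewrite -ler_norml.
Qed.

Lemma Rintegral_first_order {a : R -> R} {x : Omega -> R} {M : R} {A : set Omega}
    {eta : R} :
  (forall y, derivable a y 1) -> continuous (derive1 a) ->
  measurable_fun setT x -> {ae P, forall w, `|x w| <= M} -> measurable A ->
  0 < eta -> exists2 del, 0 < del & forall e, `|e| <= del ->
    `|\int[P]_(w in A) (a (x w + e) - a (x w)) -
      e * \int[P]_(w in A) derive1 a (x w)| <= `|e| * eta.
Proof.
move=> da ca' mx xM mA eta0.
have [del del0 adel] := derivable_first_order a M eta da ca' eta0.
exists del => // e edel.
have ca : continuous a.
  by move=> y; apply: differentiable_continuous; exact/derivable1_diffP.
have intA g : continuous g -> P.-integrable A (EFin \o (fun w => g (x w))).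
  move=> cg; apply: integrableS measurableT mA (@subsetT _ A) _.
  exact: integrable_comp_ae_bounded cg mx xM.
have ca_e : continuous (fun y => a (y + e)).
  move=> y; apply: continuous_comp; last exact: ca.
  by apply: cvgD; [exact: cvg_id|exact: cvg_cst].
have ca'_e : continuous (fun y => e * derive1 a y).
  by move=> y; apply: cvgM; [exact: cvg_cst|exact: ca'].
have cdiff : continuous (fun y => a (y + e) - a y).
  by move=> y; apply: cvgB; [exact: ca_e|exact: ca].
have cpsi : continuous (fun y => a (y + e) - a y - e * derive1 a y).
  by move=> y; apply: cvgB; [exact: cdiff|exact: ca'_e].
rewrite -RintegralZl //; last exact: intA (derive1 a) ca'.
rewrite -RintegralB //; [|exact: intA _ cdiff|exact: intA _ ca'_e].
apply: le_trans (le_normr_Rintegral mA (intA _ cpsi)) _.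
apply: (@le_trans _ _ (\int[P]_(w in A) (`|e| * eta))).
  apply: ae_le_Rintegral mA _ _ _.
  - exact: intA _ (fun y => continuous_comp (cpsi y) (@norm_continuous _ _ _)).
  - by apply: (intA (fun=> `|e| * eta)) => y; exact: cvg_cst.
  - by apply: filterS xM => w xwM _; exact: adel.
rewrite Rintegral_cst // ler_piMr ?mulr_ge0 ?(ltW eta0) //.
have PA1 : (P A <= 1)%E := probability_le1 P mA.
have PAfin : P A \is a fin_num by rewrite ge0_fin_numE // (le_lt_trans PA1) ?ltry.
by rewrite -lee_fin fineK.
Qed.

End integration.

Section market.
Context {d} {Omega : measurableType d} {R : realType} {P : probability Omega R}
  {T : nat} {F : nat -> set (set Omega)} {r : nat -> Omega -> R}.
Hypothesis hF : filtration T F.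
Hypothesis hr_pred : forall t, (1 <= t <= T)%N -> meas_wrt (F t.-1) (r t).
Hypothesis hr_ge0 : forall t w, (1 <= t <= T)%N -> 0 <= r t w.

Lemma bankS t w : bank r t.+1 w = bank r t w * (1 + r t.+1 w).
Proof. by rewrite /bank big_nat_recr. Qed.

Lemma bank_ge1 t w : (t <= T)%N -> 1 <= bank r t w.
Proof.
elim: t => [|t IH] tT; first by rewrite /bank big_geq.
by rewrite bankS mulr_ege1 ?IH 1?ltnW // lerDl hr_ge0.
Qed.

Lemma bank_le K t w : (forall k, (1 <= k <= T)%N -> `|r k w| <= K) ->
  (t <= T)%N -> bank r t w <= (1 + K) ^+ t.
Proof.
move=> rK; elim: t => [|t IH] tT; first by rewrite /bank big_geq ?expr0.
have ht : (1 <= t.+1 <= T)%N by [].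
have := hr_ge0 _ w ht; have := ler_normlW (rK _ ht) => rle rge.
rewrite bankS exprSr ler_pM ?IH 1?ltnW ?lerD2l //; last lra.
exact: le_trans ler01 (bank_ge1 _ w (ltnW tT)).
Qed.

Lemma meas_wrt_bank t : (t <= T)%N -> meas_wrt (F t) (bank r t).
Proof.
have [sF Fmono] := hF; elim: t => [|t IH] tT.
  have -> : bank r 0 = fun=> 1 by apply/funext => w; rewrite /bank big_geq.
  by apply: meas_wrt_cst; case: (sF 0%N isT).
have [sFt _] := sF _ tT.
have FtF : F t `<=` F t.+1 by apply: Fmono; rewrite leqnSn tT.
have -> : bank r t.+1 = fun w => bank r t w * (1 + r t.+1 w).
  by apply/funext => w; rewrite bankS.
exact (meas_wrtM sFt (meas_wrtS FtF (IH (ltnW tT)))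
  (meas_wrtD sFt (meas_wrt_cst sFt 1) (meas_wrtS FtF (hr_pred t.+1 tT)))).
Qed.

Context {W : Omega -> R} {Y : nat -> Omega -> R}.
Hypothesis hY : admissible P T F r W Y.

Lemma meas_wrt_disc {k} : (1 <= k <= T)%N -> meas_wrt (F k) (disc r Y k).
Proof.
move=> hk; have kT : (k <= T)%N by case/andP: hk.
have [sFk _] := hF.1 k kT.
exact (meas_wrt_divr sFk (hY.1 k hk) (meas_wrt_bank _ kT)
  (fun w => bank_ge1 k w kT)).
Qed.

Lemma measurable_disc {k} : (1 <= k <= T)%N -> measurable_fun setT (disc r Y k).
Proof.
move=> hk; have kT : (k <= T)%N by case/andP: hk.
exact (meas_wrt_measurable (hF.1 k kT) (meas_wrt_disc hk)).
Qed.

Lemma disc_ae_bounded {k} : (1 <= k <= T)%N ->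
  exists M, {ae P, forall w, `|disc r Y k w| <= M}.
Proof.
move=> hk; have [_ [M YM]] := hY.2.1 k hk; exists M; apply: filterS YM => w YwM.
have b1 : 1 <= bank r k w by apply: bank_ge1; case/andP: hk.
rewrite /disc normrM normfV (ger0_norm (le_trans ler01 b1)) ler_pdivrMr; last lra.
have := normr_ge0 (Y k w); nra.
Qed.

Lemma integrable_disc_comp {g : R -> R} {k} : continuous g -> (1 <= k <= T)%N ->
  P.-integrable setT (EFin \o (fun w => g (disc r Y k w))).
Proof.
move=> cg hk; have [M YM] := disc_ae_bounded hk.
exact: integrable_comp_ae_bounded cg (measurable_disc hk) YM.
Qed.

Lemma objectiveE (u : nat -> R -> R) (lam : nat -> R) :
  (forall k, (1 <= k <= T)%N -> continuous (u k)) ->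
  objective P T r u lam Y =
  (\sum_(1 <= k < T.+1) lam k * \int[P]_w u k (disc r Y k w))%:E.
Proof.
move=> cu; rewrite /objective -sumEFin; apply: eq_big_nat => k hk.
by rewrite EFinM integral_EFin //; exact: integrable_disc_comp (cu k hk) hk.
Qed.

End market.

Section transfer.
Context {d} {Omega : measurableType d} {R : realType} {P : probability Omega R}
  {T : nat} {F : nat -> set (set Omega)} {r : nat -> Omega -> R}.
Hypothesis hF : filtration T F.
Hypothesis hr_pred : forall t, (1 <= t <= T)%N -> meas_wrt (F t.-1) (r t).
Hypothesis hr_ge0 : forall t w, (1 <= t <= T)%N -> 0 <= r t w.
Context {K : R}.
Hypothesis hr_le : forall t w, (1 <= t <= T)%N -> `|r t w| <= K.
Context {s t : nat} {A : set Omega}.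
Hypotheses (hs1 : (1 <= s)%N) (hst : (s < t)%N) (htT : (t <= T)%N) (hA : F s A).

Definition transfer_dir (k : nat) (w : Omega) : R :=
  \1_A w * ((k == s)%:R - (k == t)%:R).

Definition transfer (X : nat -> Omega -> R) (e : R) (k : nat) (w : Omega) : R :=
  X k w + e * bank r k w * transfer_dir k w.

Let hs : (1 <= s <= T)%N. Proof. by rewrite hs1 (leq_trans (ltnW hst)). Qed.
Let ht : (1 <= t <= T)%N. Proof. by rewrite htT (leq_trans hs1 (ltnW hst)). Qed.

Lemma transfer_dir_s w : transfer_dir s w = \1_A w.
Proof. by rewrite /transfer_dir eqxx (ltn_eqF hst) subr0 mulr1. Qed.

Lemma transfer_dir_t w : transfer_dir t w = - \1_A w.
Proof. by rewrite /transfer_dir eqxx (gtn_eqF hst) sub0r mulrN1. Qed.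

Lemma transfer_dir_out k w : k != s -> k != t -> transfer_dir k w = 0.
Proof. by move=> /negbTE ks /negbTE kt; rewrite /transfer_dir ks kt subrr mulr0. Qed.

Lemma normr_transfer_dir k w : `|transfer_dir k w| <= 1.
Proof.
have normA : `|\1_A w : R| <= 1.
  by rewrite indicE; case: (w \in A); rewrite ?normr1 ?normr0.
have [->|ks] := eqVneq k s; first by rewrite transfer_dir_s.
have [->|kt] := eqVneq k t; first by rewrite transfer_dir_t normrN.
by rewrite transfer_dir_out ?normr0.
Qed.

Lemma sum_transfer_dir w : \sum_(1 <= k < T.+1) transfer_dir k w = 0.
Proof.
rewrite (@sum_nat_supp2 _ _ _ s t) ?(ltn_eqF hst) //.
  by rewrite transfer_dir_s transfer_dir_t subrr.
by move=> k _; exact: transfer_dir_out.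
Qed.

Lemma meas_wrt_transfer_dir {k} : (k <= T)%N -> meas_wrt (F k) (transfer_dir k).
Proof.
move=> kT; have [sFk _] := hF.1 k kT; have [sk|ks] := leqP s k.
  have FkA : F k A by apply: (hF.2 s k) hA; rewrite sk kT.
  exact (meas_wrtM sFk (meas_wrt_indic sFk FkA) (meas_wrt_cst sFk _)).
have -> : transfer_dir k = fun=> 0.
  apply/funext => w; rewrite transfer_dir_out //.
    by rewrite ltn_eqF.
  by rewrite ltn_eqF // (ltn_trans ks hst).
exact: meas_wrt_cst.
Qed.

Lemma disc_transfer X e k w : (k <= T)%N ->
  disc r (transfer X e) k w = disc r X k w + e * transfer_dir k w.
Proof.
move=> kT; have b1 := bank_ge1 hr_ge0 k w kT.
rewrite /disc /transfer; field; by rewrite gt_eqF // (lt_le_trans ltr01 b1).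
Qed.

Context {W : Omega -> R} {X : nat -> Omega -> R}.
Hypothesis hX : admissible P T F r W X.

Lemma meas_wrt_transfer e k : (1 <= k <= T)%N -> meas_wrt (F k) (transfer X e k).
Proof.
move=> hk; have kT : (k <= T)%N by case/andP: hk.
have [sFk _] := hF.1 k kT.
exact (meas_wrtD sFk (hX.1 k hk) (meas_wrtM sFk
  (meas_wrtM sFk (meas_wrt_cst sFk e) (meas_wrt_bank hF hr_pred k kT))
  (meas_wrt_transfer_dir kT))).
Qed.

Lemma transfer_ae_bounded e k : (1 <= k <= T)%N ->
  exists M, {ae P, forall w, `|transfer X e k w| <= M}.
Proof.
move=> hk; have kT : (k <= T)%N by case/andP: hk.
have [_ [M XM]] := hX.2.1 k hk; exists (M + `|e| * (1 + K) ^+ k).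
apply: filterS XM => w XwM; apply: le_trans (ler_normD _ _) _; rewrite lerD //.
have b0 : 0 <= bank r k w by apply: le_trans ler01 (bank_ge1 hr_ge0 k w kT).
have bK := bank_le hr_ge0 K k w (fun j => hr_le j w) kT.
rewrite normrM [`|e * _|]normrM (ger0_norm b0) -mulrA ler_wpM2l //.
by rewrite -[leRHS]mulr1 ler_pM // normr_transfer_dir.
Qed.

Lemma transfer_admissible e : admissible P T F r W (transfer X e).
Proof.
split; [exact: meas_wrt_transfer e|split].
- move=> k hk; have kT : (k <= T)%N by case/andP: hk.
  split; last exact: transfer_ae_bounded.
  have FkT : F k `<=` F T by apply: hF.2; rewrite kT leqnn.
  exact (meas_wrtS FkT (meas_wrt_transfer e k hk)).
- apply: filterS hX.2.2 => w <-.
  under eq_big_nat => k /andP[_ kT] do rewrite disc_transfer //.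
  by rewrite big_split /= -mulr_sumr sum_transfer_dir mulr0 addr0.
Qed.

Lemma Rintegral_transfer_sub {g : R -> R} e {k} : continuous g -> (1 <= k <= T)%N ->
  \int[P]_w g (disc r (transfer X e) k w) - \int[P]_w g (disc r X k w) =
  \int[P]_w (g (disc r X k w + e * transfer_dir k w) - g (disc r X k w)).
Proof.
move=> cg hk; have kT : (k <= T)%N by case/andP: hk.
rewrite -RintegralB //; last 2 first.
- exact (integrable_disc_comp hF hr_pred hr_ge0 (transfer_admissible e) cg hk).
- exact (integrable_disc_comp hF hr_pred hr_ge0 hX cg hk).
by apply: eq_Rintegral => w _; rewrite disc_transfer.
Qed.

Lemma objective_transfer (u : nat -> R -> R) (lam : nat -> R) e :
  (forall k, (1 <= k <= T)%N -> continuous (u k)) ->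
  objective P T r u lam (transfer X e) = (objective P T r u lam X +
    (lam s * \int[P]_(w in A) (u s (disc r X s w + e) - u s (disc r X s w)) +
     lam t * \int[P]_(w in A) (u t (disc r X t w - e) - u t (disc r X t w)))%:E)%E.
Proof.
move=> cu; have hXe := transfer_admissible e.
rewrite (objectiveE hF hr_pred hr_ge0 hXe _ _ cu).
rewrite (objectiveE hF hr_pred hr_ge0 hX _ _ cu).
rewrite -EFinD; congr EFin; apply/eqP; rewrite addrC -subr_eq -sumrB; apply/eqP.
rewrite (@sum_nat_supp2 _ _ _ s t) ?(ltn_eqF hst) //.
- rewrite -!mulrBr (Rintegral_transfer_sub e (cu s hs) hs).
  rewrite (Rintegral_transfer_sub e (cu t ht) ht).
  congr (_ * _ + _ * _); rewrite -Rintegral_indic_shift; apply: eq_Rintegral => w _.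
  + by rewrite transfer_dir_s.
  + by rewrite transfer_dir_t mulrN -mulNr.
- move=> k hk ks kt; rewrite -mulrBr (Rintegral_transfer_sub e (cu k hk) hk).
  under eq_Rintegral do rewrite transfer_dir_out // mulr0 addr0 subrr.
  by rewrite Rintegral_cst_prob mulr0.
Qed.

Context {u : nat -> R -> R} {lam : nat -> R}.
Hypothesis hu_der : forall k, (1 <= k <= T)%N -> forall x, derivable (u k) x 1.
Hypothesis hu_C1 : forall k, (1 <= k <= T)%N -> continuous (derive1 (u k)).
Hypothesis hlam_ge0 : forall k, (1 <= k <= T)%N -> 0 <= lam k.
Hypothesis hX_opt : forall Y, admissible P T F r W Y ->
  (objective P T r u lam Y <= objective P T r u lam X)%E.

Let hu_cont k : (1 <= k <= T)%N -> continuous (u k).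
Proof.
by move=> hk y; apply: differentiable_continuous; exact/derivable1_diffP/hu_der.
Qed.

Lemma transfer_gain_le0 e :
  lam s * \int[P]_(w in A) (u s (disc r X s w + e) - u s (disc r X s w)) +
  lam t * \int[P]_(w in A) (u t (disc r X t w - e) - u t (disc r X t w)) <= 0.
Proof.
have := hX_opt _ (transfer_admissible e).
rewrite objective_transfer // (objectiveE hF hr_pred hr_ge0 hX _ _ hu_cont).
by rewrite -EFinD lee_fin gerDl.
Qed.

Lemma first_order_approx eta : 0 < eta ->
  `|lam t * \int[P]_(w in A) derive1 (u t) (disc r X t w) -
    lam s * \int[P]_(w in A) derive1 (u s) (disc r X s w)| <= (lam s + lam t) * eta.
Proof.
move=> eta0; have mA : measurable A by apply: (hF.1 s _).2; case/andP: hs.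
have [Ms XsM] := disc_ae_bounded hr_ge0 hX hs.
have [Mt XtM] := disc_ae_bounded hr_ge0 hX ht.
have [ds ds0 Hs] := Rintegral_first_order P (hu_der s hs) (hu_C1 s hs)
  (measurable_disc hF hr_pred hr_ge0 hX hs) XsM mA eta0.
have [dt dt0 Ht] := Rintegral_first_order P (hu_der t ht) (hu_C1 t ht)
  (measurable_disc hF hr_pred hr_ge0 hX ht) XtM mA eta0.
set Is := \int[P]_(w in A) derive1 (u s) (disc r X s w).
set It := \int[P]_(w in A) derive1 (u t) (disc r X t w).
pose del := Num.min ds dt.
have del0 : 0 < del by rewrite lt_min ds0 dt0.
have [dds ddt] : del <= ds /\ del <= dt by rewrite !ge_min !lexx orbT.
have lin e : `|e| <= del ->
    e * (lam s * Is - lam t * It) <= `|e| * ((lam s + lam t) * eta).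
  move=> edel; have /Hs := le_trans edel dds.
  rewrite ler_norml lerBrDr addrC -/Is => /andP[Gs_ge _].
  have /Ht : `|- e| <= dt by rewrite normrN (le_trans edel ddt).
  rewrite normrN ler_norml lerBrDr addrC -/It => /andP[Gt_ge _].
  have Gs := ler_wpM2l (hlam_ge0 s hs) Gs_ge.
  have Gt := ler_wpM2l (hlam_ge0 t ht) Gt_ge.
  rewrite -subr_le0; apply: le_trans (le_trans (lerD Gs Gt) (transfer_gain_le0 e)).
  by rewrite le_eqVlt; apply/orP; left; apply/eqP; ring.
have := lin del; rewrite gtr0_norm // ler_pM2l // => h1.
have := lin (- del); rewrite normrN gtr0_norm // mulNr -mulrN ler_pM2l // => h2.
rewrite distrC ler_norml; apply/andP; split; lra.
Qed.

Lemma first_order_condition :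
  lam t * \int[P]_(w in A) derive1 (u t) (disc r X t w) =
  lam s * \int[P]_(w in A) derive1 (u s) (disc r X s w).
Proof.
apply/eqP; rewrite -subr_eq0; apply/eqP.
apply: (normr_le_eps_eq0 _ _ _ first_order_approx).
by rewrite addr_ge0 ?hlam_ge0.
Qed.

End transfer.

Section optimal_solution.
Context {d} {Omega : measurableType d} {R : realType} {P : probability Omega R}
  {T : nat} {F : nat -> set (set Omega)} {r : nat -> Omega -> R}.
Hypothesis hF : filtration T F.
Hypothesis hr_pred : forall t, (1 <= t <= T)%N -> meas_wrt (F t.-1) (r t).
Hypothesis hr_ge0 : forall t w, (1 <= t <= T)%N -> 0 <= r t w.
Context {K : R}.
Hypothesis hr_le : forall t w, (1 <= t <= T)%N -> `|r t w| <= K.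
Context {u : nat -> R -> R}.
Hypothesis hu_der : forall t, (1 <= t <= T)%N -> forall x, derivable (u t) x 1.
Hypothesis hu_C1 : forall t, (1 <= t <= T)%N -> continuous (derive1 (u t)).
Context {lam : nat -> R}.
Hypothesis hlam_ge0 : forall t, (1 <= t <= T)%N -> 0 <= lam t.
Context {W : Omega -> R} {X : nat -> Omega -> R}.
Hypothesis hX : solves P T F r W u lam X.

Lemma solves_first_order {s t A} : (1 <= s)%N -> (s < t)%N -> (t <= T)%N -> F s A ->
  lam t * \int[P]_(w in A) derive1 (u t) (disc r X t w) =
  lam s * \int[P]_(w in A) derive1 (u s) (disc r X s w).
Proof.
move=> s1 st tT hA.
exact (first_order_condition hF hr_pred hr_ge0 hr_le s1 st tT hA hX.1
  hu_der hu_C1 hlam_ge0 hX.2).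
Qed.

Lemma solves_martingale :
  martingale P T F (fun t w => lam t * derive1 (u t) (disc r X t w)).
Proof.
have cM t : (1 <= t <= T)%N -> continuous (fun y => lam t * derive1 (u t) y).
  by move=> ht y; apply: cvgM; [exact: cvg_cst|exact: hu_C1].
have intM t (ht : (1 <= t <= T)%N) :=
  integrable_disc_comp hF hr_pred hr_ge0 hX.1 (cM t ht) ht.
split; [|split; first exact: intM].
  move=> t ht; have [sFt _] := hF.1 t (proj2 (andP ht)).
  exact (meas_wrt_comp sFt _ (cM t ht) (meas_wrt_disc hF hr_pred hr_ge0 hX.1 ht)).
move=> s t s1 /andP[+ tT] A hA; rewrite leq_eqVlt => /predU1P[<-//|st].
have sT := ltnW (leq_trans st tT).
have mA : measurable A by exact: (hF.1 s sT).2.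
have [hs ht] : (1 <= s <= T)%N /\ (1 <= t <= T)%N.
  by rewrite s1 sT tT (leq_trans s1 (ltnW st)).
have intA k (hk : (1 <= k <= T)%N) := integrableS measurableT mA (@subsetT _ A)
  (integrable_disc_comp hF hr_pred hr_ge0 hX.1 (hu_C1 k hk) hk).
rewrite (integral_EFin P mA (intM t ht)) (integral_EFin P mA (intM s hs)).
rewrite (RintegralZl _ mA (intA t ht)) (RintegralZl _ mA (intA s hs)).
by rewrite (solves_first_order s1 st tT hA).
Qed.

Hypothesis hu_pos : forall t, (1 <= t <= T)%N -> forall x, 0 < derive1 (u t) x.
Hypothesis hlam_nz : exists2 t, (1 <= t <= T)%N & lam t != 0.

Lemma solves_lam_gt0 t : (1 <= t <= T)%N -> 0 < lam t.
Proof.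
move=> ht; rewrite lt_def hlam_ge0 // andbT; apply/eqP => lam0.
have [t' ht' lam'] := hlam_nz.
have I_gt0 : 0 < \int[P]_w derive1 (u t') (disc r X t' w).
  have [M XM] := disc_ae_bounded hr_ge0 hX.1 ht'.
  exact (Rintegral_comp_gt0 P (hu_C1 t' ht') (hu_pos t' ht')
    (measurable_disc hF hr_pred hr_ge0 hX.1 ht') XM).
suff : lam t' * \int[P]_w derive1 (u t') (disc r X t' w) = 0.
  by move/eqP; rewrite mulf_eq0 (negbTE lam') (gt_eqF I_gt0).
have [t1 t'1] := (proj1 (andP ht), proj1 (andP ht')).
have [tT t'T] := (proj2 (andP ht), proj2 (andP ht')).
case: (ltngtP t t') => [tt'|t't|tt'].
- have tT' := ltnW (leq_trans tt' t'T).
  by rewrite (solves_first_order t1 tt' t'T (filtration_setT hF tT')) lam0 mul0r.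
- by rewrite -(solves_first_order t'1 t't tT (filtration_setT hF t'T)) lam0 mul0r.
- by move: lam'; rewrite -tt' lam0 eqxx.
Qed.

End optimal_solution.

Theorem lemma2p11 (d : measure_display) (Omega : measurableType d)
  (R : realType) (P : probability Omega R) (T : nat) (hT : (1 <= T)%N)
  (F : nat -> set (set Omega)) (hF : filtration T F)
  (r : nat -> Omega -> R)
  (hr_pred : forall t, (1 <= t <= T)%N -> meas_wrt (F t.-1) (r t))
  (hr_nonneg : forall t w, (1 <= t <= T)%N -> 0 <= r t w)
  (hr_bdd : exists K : R, forall t w, (1 <= t <= T)%N -> `|r t w| <= K)
  (u : nat -> R -> R)
  (hu_conc : forall t, (1 <= t <= T)%N -> strictly_concave (u t))
  (hu_der : forall t, (1 <= t <= T)%N -> forall x, derivable (u t) x 1)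
  (hu_C1 : forall t, (1 <= t <= T)%N -> continuous (derive1 (u t)))
  (hu_pos : forall t, (1 <= t <= T)%N -> forall x, 0 < derive1 (u t) x)
  (W : Omega -> R) (hW : Linfty P (F T) W)
  (lam : nat -> R)
  (hlam_nonneg : forall t, (1 <= t <= T)%N -> 0 <= lam t)
  (hlam_nz : exists2 t, (1 <= t <= T)%N & lam t != 0) :
  (forall X, solves P T F r W u lam X ->
     martingale P T F (fun t w => lam t * derive1 (u t) (disc r X t w))) /\
  ((exists X, solves P T F r W u lam X) ->
     forall t, (1 <= t <= T)%N -> 0 < lam t).
Proof.
have [K hK] := hr_bdd.
split=> [X hX|[X hX]].
  exact (solves_martingale hF hr_pred hr_nonneg hK hu_der hu_C1 hlam_nonneg hX).
exact (solves_lam_gt0 hF hr_pred hr_nonneg hK hu_der hu_C1 hlam_nonneg hX hu_pos hlam_nz).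
Qed.
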